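(* If $G$ is a group in which every non-trivial element is a generalized torsion element, then $\mathrm{scl}_G(g)=0$ for all $g\in G$.
   Context: For $g,x$ in a group, $g^{x}:=xgx^{-1}$. A non-trivial element $g$ of a group $G$ is a generalized torsion element if there exist a positive integer $n$ and $x_1,\ldots,x_n\in G$ with $g^{x_1}g^{x_2}\cdots g^{x_n}=1$. For $g\in[G,G]$, the commutator length $\mathrm{cl}_G(g)$ is the least number of commutators whose product is $g$, and the stable commutator length is $\mathrm{scl}_G(g)=\lim_{n\to\infty}\mathrm{cl}_G(g^n)/n$. This is extended to all of $G$ by $\mathrm{scl}_G(g)=\mathrm{scl}_G(g^k)/k$ if $g^k\in[G,G]$ for some $k>0$, and $\mathrm{scl}_G(g)=\infty$ otherwise. *)

From Stdlib Require Import Reals List Classical ClassicalEpsilon.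
From Coquelicot Require Import Coquelicot.
Import ListNotations.
Open Scope R_scope.

Record Group (G : Type) := {
  gmul : G -> G -> G;
  ginv : G -> G;
  gone : G;
  gmulA : forall x y z, gmul x (gmul y z) = gmul (gmul x y) z;
  gmul1l : forall x, gmul gone x = x;
  gmul1r : forall x, gmul x gone = x;
  gmulVl : forall x, gmul (ginv x) x = gone;
  gmulVr : forall x, gmul x (ginv x) = gone
}.
Arguments gmul {G} _ _ _.
Arguments ginv {G} _ _.
Arguments gone {G} _.

Section GroupDefs.
Context {G : Type} (Gr : Group G).

Local Notation "x * y" := (gmul Gr x y).
Local Notation "x ^-1" := (ginv Gr x) (at level 3).
Local Notation "1" := (gone Gr).

Definition gconj (g x : G) : G := x * g * x^-1.

Definition gprod (l : list G) : G := fold_right (fun a b => a * b) 1 l.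

Fixpoint gpow (g : G) (n : nat) : G :=
  match n with O => 1 | S m => g * gpow g m end.

Definition gen_torsion (g : G) : Prop :=
  g <> 1 /\ exists xs : list G, xs <> [] /\ gprod (map (gconj g) xs) = 1.

Definition gcomm (a b : G) : G := a * b * a^-1 * b^-1.

Definition prod_n_comm (n : nat) (g : G) : Prop :=
  exists l : list (G * G), length l = n /\ gprod (map (fun p => gcomm (fst p) (snd p)) l) = g.

Definition in_derived (g : G) : Prop := exists n, prod_n_comm n g.

(** commutator length: the least number of commutators whose product is g
    (meaningful for g in [G,G]; arbitrary otherwise) *)
Definition cl (g : G) : nat :=
  epsilon (inhabits 0%nat)
    (fun n => prod_n_comm n g /\ forall m, prod_n_comm m g -> (n <= m)%nat).

Definition scl_derived (g : G) : Rbar :=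
  Lim_seq (fun n => INR (cl (gpow g n)) / INR n).

Definition scl (g : G) : Rbar :=
  match excluded_middle_informative (exists k, (0 < k)%nat /\ in_derived (gpow g k)) with
  | left _ =>
      let k := epsilon (inhabits 1%nat) (fun k => (0 < k)%nat /\ in_derived (gpow g k)) in
      Rbar_mult (scl_derived (gpow g k)) (Finite (/ INR k))
  | right _ => p_infty
  end.

End GroupDefs.

(** If g^{x_1} ... g^{x_n} = 1, then g^n is a product of n commutators, because
    modulo [G,G] every conjugate of g equals g. So every element a of such a group
    has a power a^m, m > 0, with cl(a^m) <= m. For h in [G,G] and any j > 0,
    applying this to a = h^j and dividing N by jm gives cl(h^N) <= N/j + O(1),
    whence cl(h^N)/N tends to 0; so scl vanishes on [G,G], and also on all of G
    since every element has a power in [G,G]. *)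

From Stdlib Require Import Reals.
From Coquelicot Require Import Coquelicot.
From Stdlib Require Import Lia Lra List Classical ClassicalEpsilon Arith Wf_nat.
Import ListNotations.

Lemma is_lim_seq_ratio_0 (u : nat -> nat) :
  (forall j, (0 < j)%nat -> exists B, forall N, (j * u N <= N + j * B)%nat) ->
  is_lim_seq (fun N => INR (u N) / INR N) 0.
Proof.
  intros Hu. apply is_lim_seq_spec. intros [eps Heps]; simpl.
  destruct (archimed_cor1 (eps / 2)) as [j [Hj j_pos]]; [lra|].
  destruct (Hu j j_pos) as [B HB].
  assert (HB1 : 0 < INR B + 1) by (pose proof (pos_INR B); lra).
  destruct (archimed_cor1 (eps / (2 * (INR B + 1)))) as [N0 [HN0 N0_pos]].
  { apply Rdiv_lt_0_compat; lra. }
  exists N0. intros N HN.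
  assert (N_pos : 0 < INR N) by (apply lt_0_INR; lia).
  assert (j_posR : 0 < INR j) by (apply lt_0_INR; lia).
  assert (Hj_eps : 1 < INR j * (eps / 2)).
  { apply Rmult_lt_compat_l with (r := INR j) in Hj; [|lra].
    now rewrite Rinv_r in Hj by lra. }
  assert (HN_eps : 2 * (INR B + 1) < INR N * eps).
  { assert (HN0R : INR N0 <= INR N) by (apply le_INR; lia).
    assert (N0_posR : 0 < INR N0) by (apply lt_0_INR; lia).
    apply Rmult_lt_compat_l with (r := INR N0) in HN0; [|lra].
    rewrite Rinv_r in HN0 by lra. unfold Rdiv in HN0.
    apply Rmult_lt_compat_r with (r := 2 * (INR B + 1)) in HN0; [|lra].
    rewrite Rmult_1_l, !Rmult_assoc, Rinv_l, Rmult_1_r in HN0 by lra. nra. }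
  assert (HuN : INR j * INR (u N) <= INR N + INR j * INR B).
  { rewrite <- !mult_INR, <- plus_INR. apply le_INR, HB. }
  rewrite Rminus_0_r, Rabs_pos_eq.
  2: { apply Rcomplements.Rdiv_le_0_compat; [apply pos_INR | lra]. }
  apply Rcomplements.Rlt_div_l; [lra|].
  apply Rmult_lt_reg_l with (INR j); [lra|]. nra.
Qed.

Section GroupTheory.
Context {G : Type} (Gr : Group G).
Local Notation "x * y" := (gmul Gr x y).
Local Notation "x ^-1" := (ginv Gr x) (at level 3).
Local Notation "1" := (gone Gr).

Lemma mulKg x z : x^-1 * (x * z) = z.
Proof. now rewrite (gmulA _ Gr), (gmulVl _ Gr), (gmul1l _ Gr). Qed.

Lemma mulKVg x z : x * (x^-1 * z) = z.
Proof. now rewrite (gmulA _ Gr), (gmulVr _ Gr), (gmul1l _ Gr). Qed.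

Lemma invg_of_mul1 x y : x * y = 1 -> y = x^-1.
Proof. intros Hxy. now rewrite <- (mulKg x y), Hxy, (gmul1r _ Gr). Qed.

Lemma invMg x y : (x * y)^-1 = y^-1 * x^-1.
Proof.
  symmetry; apply invg_of_mul1.
  rewrite <- (gmulA _ Gr), (mulKVg y). apply (gmulVr _ Gr).
Qed.

Lemma invgK x : (x^-1)^-1 = x.
Proof. symmetry; apply invg_of_mul1, (gmulVl _ Gr). Qed.

Lemma invg1 : 1^-1 = 1.
Proof. symmetry; apply invg_of_mul1, (gmul1l _ Gr). Qed.

Ltac group_simpl :=
  repeat rewrite ?invMg, ?invgK, ?invg1, <- ?(gmulA _ Gr), ?(gmul1l _ Gr),
    ?(gmul1r _ Gr), ?(gmulVl _ Gr), ?(gmulVr _ Gr), ?mulKVg, ?mulKg.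

Lemma gprod_app l1 l2 : gprod Gr (l1 ++ l2) = gprod Gr l1 * gprod Gr l2.
Proof.
  induction l1 as [|a l1 IH]; simpl; [now group_simpl|].
  rewrite IH. now group_simpl.
Qed.

Lemma gpowD x a b : gpow Gr x (a + b) = gpow Gr x a * gpow Gr x b.
Proof.
  induction a as [|a IH]; simpl; [now group_simpl|].
  rewrite IH. now group_simpl.
Qed.

Lemma gpowM x a b : gpow Gr x (a * b) = gpow Gr (gpow Gr x a) b.
Proof.
  rewrite Nat.mul_comm. induction b as [|b IH]; simpl; [easy|].
  now rewrite gpowD, IH.
Qed.

Lemma prod_n_comm0 : prod_n_comm Gr 0 1.
Proof. now exists []. Qed.

Lemma prod_n_comm_gcomm u v : prod_n_comm Gr 1 (gcomm Gr u v).
Proof. exists [(u, v)]. split; [easy|]. simpl. now group_simpl. Qed.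

Lemma prod_n_comm_mul a b x y :
  prod_n_comm Gr a x -> prod_n_comm Gr b y -> prod_n_comm Gr (a + b) (x * y).
Proof.
  intros [l1 [Hl1 <-]] [l2 [Hl2 <-]]. exists (l1 ++ l2). split.
  - rewrite length_app; lia.
  - now rewrite map_app, gprod_app.
Qed.

Lemma prod_n_comm_inv n x : prod_n_comm Gr n x -> prod_n_comm Gr n x^-1.
Proof.
  intros [l [<- <-]]. induction l as [|[u v] l IH]; simpl.
  - rewrite invg1. apply prod_n_comm0.
  - rewrite invMg, <- Nat.add_1_r. apply prod_n_comm_mul; [exact IH|].
    replace (gcomm Gr u v)^-1 with (gcomm Gr v u); [apply prod_n_comm_gcomm|].
    unfold gcomm. now group_simpl.
Qed.

Lemma prod_n_comm_pow n x q :
  prod_n_comm Gr n x -> prod_n_comm Gr (q * n) (gpow Gr x q).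
Proof.
  intros Hx. induction q as [|q IH]; simpl; [apply prod_n_comm0|].
  now apply prod_n_comm_mul.
Qed.

Lemma prod_n_comm_gpow1 : prod_n_comm Gr 1 (gpow Gr 1 1).
Proof.
  replace (gpow Gr 1 1) with (gcomm Gr 1 1); [apply prod_n_comm_gcomm|].
  unfold gcomm. simpl. now group_simpl.
Qed.

Lemma gprod_conj_pow_mul a xs : exists C, prod_n_comm Gr (length xs) C /\
  gprod Gr (map (gconj Gr a) xs) = gpow Gr a (length xs) * C.
Proof.
  induction xs as [|x xs [C [HC E]]]; simpl.
  - exists 1. split; [apply prod_n_comm0 | now group_simpl].
  - set (p := gpow Gr a (length xs)) in *.
    (* x a x^-1 p = (a p) [u, v] with u = p^-1 a^-1 p and v = p^-1 x p *)
    exists (gcomm Gr (p^-1 * a^-1 * p) (p^-1 * x * p) * C). split.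
    + apply (prod_n_comm_mul 1); [apply prod_n_comm_gcomm | exact HC].
    + rewrite E. unfold gconj, gcomm. now group_simpl.
Qed.

Lemma gen_torsion_pow_prod_n_comm a :
  gen_torsion Gr a -> exists m, (0 < m)%nat /\ prod_n_comm Gr m (gpow Gr a m).
Proof.
  intros [_ [xs [xs_nil Hxs]]].
  destruct (gprod_conj_pow_mul a xs) as [C [HC E]].
  exists (length xs). split; [destruct xs; simpl; [congruence | lia]|].
  rewrite Hxs in E. replace (gpow Gr a (length xs)) with C^-1.
  - now apply prod_n_comm_inv.
  - symmetry. apply (invg_of_mul1 C).
    rewrite <- (mulKg (gpow Gr a (length xs)) C), <- E. now group_simpl.
Qed.

Lemma cl_le x m : prod_n_comm Gr m x -> (cl Gr x <= m)%nat.
Proof.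
  intros Hm. unfold cl.
  destruct (dec_inh_nat_subset_has_unique_least_element (fun n => prod_n_comm Gr n x))
    as [n [Hn _]]; [intros; apply classic | eauto |].
  now apply (epsilon_spec (inhabits 0%nat)
    (fun n => prod_n_comm Gr n x /\ forall m, prod_n_comm Gr m x -> (n <= m)%nat)
    (ex_intro _ n Hn)).
Qed.

Section AllGeneralizedTorsion.
Hypothesis all_gen_torsion : forall g, g <> 1 -> gen_torsion Gr g.

Lemma exists_pow_prod_n_comm a :
  exists m, (0 < m)%nat /\ prod_n_comm Gr m (gpow Gr a m).
Proof.
  destruct (classic (a = 1)) as [->|a_neq1].
  - exists 1%nat. split; [lia | apply prod_n_comm_gpow1].
  - now apply gen_torsion_pow_prod_n_comm, all_gen_torsion.
Qed.

Lemma cl_gpow_sublinear c h : prod_n_comm Gr c h ->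
  forall j, (0 < j)%nat -> exists B, forall N, (j * cl Gr (gpow Gr h N) <= N + j * B)%nat.
Proof.
  intros Hh j j_pos.
  destruct (exists_pow_prod_n_comm (gpow Gr h j)) as [m [m_pos Hm]].
  exists (j * m * c)%nat. intros N.
  set (q := (N / (j * m))%nat). set (r := (N mod (j * m))%nat).
  assert (HN : N = (j * m * q + r)%nat) by (apply Nat.div_mod; lia).
  assert (Hr : (r < j * m)%nat) by (apply Nat.mod_upper_bound; lia).
  assert (Hcl : (cl Gr (gpow Gr h N) <= q * m + r * c)%nat).
  { apply cl_le. rewrite HN, gpowD, !gpowM.
    apply prod_n_comm_mul; now apply prod_n_comm_pow. }
  assert (Hrc : (r * c <= j * m * c)%nat) by (apply Nat.mul_le_mono_r; lia).
  nia.
Qed.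

Lemma scl_derived_eq0 h : in_derived Gr h -> scl_derived Gr h = 0.
Proof.
  intros [c Hc]. apply is_lim_seq_unique, is_lim_seq_ratio_0.
  now apply (cl_gpow_sublinear c).
Qed.

End AllGeneralizedTorsion.
End GroupTheory.

Theorem proposition3p3 (G : Type) (Gr : Group G) :
  (forall g : G, g <> gone Gr -> gen_torsion Gr g) ->
  forall g : G, scl Gr g = Finite 0%R.
Proof.
  intros HT g. unfold scl.
  destruct excluded_middle_informative as [Hex|Hno].
  - destruct (epsilon_spec (inhabits 1%nat)
      (fun k => (0 < k)%nat /\ in_derived Gr (gpow Gr g k)) Hex) as [_ Hd].
    rewrite (scl_derived_eq0 Gr HT _ Hd). simpl. now rewrite Rmult_0_l.
  - exfalso. apply Hno.
    destruct (exists_pow_prod_n_comm Gr HT g) as [m [m_pos Hm]].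
    exists m. split; [exact m_pos | now exists m].
Qed.
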